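(* Let $\mu$ be a positive Borel measure on $\mathbb{R}$, absolutely continuous with respect to Lebesgue measure, with finite moments of all orders, supported on a set $E$ with infinitely many points, let $c\in\mathbb{R}\setminus E$, $N>0$, and assume $\mu$ is classical or semi-classical, so that its monic orthogonal polynomials satisfy $xP_n=P_{n+1}+\beta_nP_n+\gamma_nP_{n-1}$ and a structure relation $\sigma(x)P_n'(x)=a(x;n)P_n(x)+b(x;n)P_{n-1}(x)$ with polynomials $\sigma$, $a(x;n)$, $b(x;n)$ whose degrees do not depend on $n$. With $\Lambda_n^c$ as in the context, define $$B_2(x;n)=\Lambda_{n-1}^c\Big(\frac{1}{\Lambda_{n-1}^c}+\frac{x-\beta_{n-1}}{\gamma_{n-1}}\Big),\qquad \Delta(x;n)=B_2(x;n)+\frac{\Lambda_n^c\Lambda_{n-1}^c}{\gamma_{n-1}},$$ $$C_1(x;n)=\frac{1}{\sigma(x)}\Big(a(x;n)-\Lambda_n^c\frac{b(x;n-1)}{\gamma_{n-1}}\Big),\qquad D_1(x;n)=\frac{1}{\sigma(x)}\Big(b(x;n)+\Lambda_n^c\,b(x;n-1)\Big(\frac{a(x;n-1)}{b(x;n-1)}+\frac{x-\beta_{n-1}}{\gamma_{n-1}}\Big)\Big),$$ $$C_2(x;n)=\frac{-\Lambda_{n-1}^c}{\sigma(x)}\Big(\frac{a(x;n)}{\gamma_{n-1}}+\frac{b(x;n-1)}{\gamma_{n-1}}\Big(\frac{1}{\Lambda_{n-1}^c}+\frac{x-\beta_{n-1}}{\gamma_{n-1}}\Big)\Big),$$ $$D_2(x;n)=\frac{\Lambda_{n-1}^c}{\sigma(x)}\Big[\frac{\sigma(x)-b(x;n)}{\gamma_{n-1}}+b(x;n-1)\Big(\frac{a(x;n-1)}{b(x;n-1)}+\frac{x-\beta_{n-1}}{\gamma_{n-1}}\Big)\Big(\frac{1}{\Lambda_{n-1}^c}+\frac{x-\beta_{n-1}}{\gamma_{n-1}}\Big)\Big],$$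 and for $k=1,2$ $$\xi_k^c(x;n)=\frac{C_k(x;n)B_2(x;n)\gamma_{n-1}+D_k(x;n)\Lambda_{n-1}^c}{\Delta(x;n)\gamma_{n-1}},\qquad \eta_k^c(x;n)=\frac{D_k(x;n)-C_k(x;n)\Lambda_n^c}{\Delta(x;n)}.$$ Then $\deg\Delta(x;n)=1$, and the differential operators $\mathfrak a_n=-\xi_1^c(x;n)\mathrm I+\mathrm D_x$ and $\mathfrak a_n^\dagger=-\eta_2^c(x;n)\mathrm I+\mathrm D_x$ ($\mathrm I$ the identity, $\mathrm D_x$ the derivative) satisfy $$\mathfrak a_n[Q_n^{c,N}(x)]=\eta_1^c(x;n)\,Q_{n-1}^{c,N}(x),\qquad \mathfrak a_n^\dagger[Q_{n-1}^{c,N}(x)]=\xi_2^c(x;n)\,Q_n^{c,N}(x),$$ i.e. they are lowering and raising operators for $\{Q_n^{c,N}\}$.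
   Context: $\{P_n\}$ is the monic orthogonal polynomial sequence (MOPS) for $\mu$, $\|f\|_\mu^2=\int f^2d\mu$; $\{Q_n^c\}$ is the MOPS for $\langle f,g\rangle_\nu=\int fg\frac{1}{x-c}d\mu$; $\{Q_n^{c,N}\}$ is the MOPS for $\langle f,g\rangle_{\nu_N}=\int fg\frac{1}{x-c}d\mu+Nf(c)g(c)$. $\Lambda_n^c=\frac{\pi_{n-1}-r_{n-1}}{1+NB_n^c}-\pi_{n-1}$, where $\pi_{n-1}=P_n(c)/P_{n-1}(c)$, $r_{n-1}=F_n(c)/F_{n-1}(c)$ with $F_n(s)=\int\frac{P_n(x)}{x-s}d\mu(x)$, $F_{-1}=1$, and $B_n^c=\frac{-Q_n^c(c)P_{n-1}(c)}{\|P_{n-1}\|_\mu^2}$; it is the constant with $Q_n^{c,N}=P_n+\Lambda_n^cP_{n-1}$. The statement concerns indices $n$ for which all displayed quantities are defined. *)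

From HB Require Import structures.
From mathcomp Require Import all_boot all_order all_algebra.
From mathcomp Require Import all_classical all_reals all_analysis.
Set Implicit Arguments. Unset Strict Implicit. Unset Printing Implicit Defensive.
Import Order.TTheory GRing.Theory Num.Theory.
Import numFieldNormedType.Exports.
Local Open Scope classical_set_scope.
Local Open Scope ring_scope.

Section Defs.
Variable R : realType.
Implicit Types (mu : {measure set R -> \bar R}) (p q : {poly R}).

Definition msupp mu : set R :=
  [set x | forall e : R, 0 < e -> (0 < mu (ball x e))%E].

Definition ip_mu mu p q : R := Rintegral mu setT (fun x => p.[x] * q.[x]).

Definition ip_nu mu (c : R) p q : R :=
  Rintegral mu setT (fun x => p.[x] * q.[x] / (x - c)).

Definition ip_nuN mu (c N : R) p q : R :=
  ip_nu mu c p q + N * p.[c] * q.[c].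

Definition is_MOPS (ip : {poly R} -> {poly R} -> R) (Q : nat -> {poly R}) :=
  forall n, [/\ Q n \is monic, size (Q n) = n.+1, ip (Q n) (Q n) != 0
              & forall m, (m < n)%N -> ip (Q n) (Q m) = 0].

Definition Fst mu (P : nat -> {poly R}) (n : nat) (s : R) : R :=
  Rintegral mu setT (fun x => (P n).[x] / (x - s)).

(* F_{k-1}(s) with the convention F_{-1} = 1 *)
Definition Fm1 mu (P : nat -> {poly R}) (k : nat) (s : R) : R :=
  if k is k'.+1 then Fst mu P k' s else 1.

Definition Bc mu (P Qc : nat -> {poly R}) (c : R) (n : nat) : R :=
  - (Qc n).[c] * (P n.-1).[c] / ip_mu mu (P n.-1) (P n.-1).

Definition Lambda mu (P Qc : nat -> {poly R}) (c N : R) (n : nat) : R :=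
  let pi := (P n).[c] / (P n.-1).[c] in
  let r := Fst mu P n c / Fm1 mu P n c in
  (pi - r) / (1 + N * Bc mu P Qc c n) - pi.

(* Parameters: Ln = Lambda_n^c, Lm = Lambda_{n-1}^c, bt = beta_{n-1},
   gm = gamma_{n-1}, sg = sigma(x), an = a(x;n), am = a(x;n-1),
   bn = b(x;n), bm = b(x;n-1). *)
Definition B2f (Lm bt gm x : R) : R := Lm * (1 / Lm + (x - bt) / gm).

Definition Deltaf (Ln Lm bt gm x : R) : R := B2f Lm bt gm x + Ln * Lm / gm.

Definition DeltaP (Ln Lm bt gm : R) : {poly R} :=
  Lm%:P * ((1 / Lm)%:P + ('X - bt%:P) * (gm^-1)%:P) + (Ln * Lm / gm)%:P.

Definition C1f (Ln gm sg an bm : R) : R := 1 / sg * (an - Ln * bm / gm).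

Definition D1f (Ln bt gm sg bn am bm x : R) : R :=
  1 / sg * (bn + Ln * bm * (am / bm + (x - bt) / gm)).

Definition C2f (Lm bt gm sg an bm x : R) : R :=
  - Lm / sg * (an / gm + bm / gm * (1 / Lm + (x - bt) / gm)).

Definition D2f (Lm bt gm sg bn am bm x : R) : R :=
  Lm / sg * ((sg - bn) / gm
             + bm * (am / bm + (x - bt) / gm) * (1 / Lm + (x - bt) / gm)).

Definition xif (Ck Dk Ln Lm bt gm x : R) : R :=
  (Ck * B2f Lm bt gm x * gm + Dk * Lm) / (Deltaf Ln Lm bt gm x * gm).

Definition etaf (Ck Dk Ln Lm bt gm x : R) : R :=
  (Dk - Ck * Ln) / Deltaf Ln Lm bt gm x.

End Defs.

(* Let L p = \int p dmu and M p = \int p / (x - c) dmu.  As c lies outside the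
   support, both integrals may be taken off a mu-null ball around c, so L and M
   are linear functionals on polynomials with M ((X - c) q) = L q, and the
   functional M + N ev_c of nu_N satisfies the same relation.  A monic
   orthogonal family for such a functional is therefore L-orthogonal to all
   polynomials of degree less than n - 1, which forces
   Q_n = P_n + lambda_n P_(n-1); testing against 1 and using
   ||P_m||^2 = P_m(c) F_(m+1)(c) - P_(m+1)(c) F_m(c) identifies lambda_n with
   Lambda_n^c.  Finally, for arbitrary coefficients, the three-term recurrence
   and the structure relation express the values and derivatives of
   P_n + Ln P_(n-1) and P_(n-1) + Lm P_(n-2) through P_(n-1)(x) and
   P_(n-2)(x), so both ladder relations reduce to rational identities. *)

From HB Require Import structures.
From mathcomp Require Import all_boot all_order all_algebra.
From mathcomp Require Import all_classical all_reals all_analysis.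
From mathcomp Require Import measurable_realfun ring.
Set Implicit Arguments. Unset Strict Implicit. Unset Printing Implicit Defensive.
Import Order.TTheory GRing.Theory Num.Theory.
Import numFieldNormedType.Exports.
Local Open Scope classical_set_scope.
Local Open Scope ring_scope.

Lemma size_sub_top_eq (R : nzRingType) (p q : {poly R}) k :
  (size p <= k.+1)%N -> (size q <= k.+1)%N -> p`_k = q`_k ->
  (size (p - q)%R <= k)%N.
Proof.
move=> sp sq e; apply/leq_sizeP => j; rewrite leq_eqVlt => /predU1P [<-|hj].
  by rewrite coefB e subrr.
by rewrite coefB !nth_default ?subrr // (leq_trans _ hj).
Qed.

Section OrthogonalFunctional.
Variable R : realType.
Implicit Types (p q r T U : {poly R}).

Definition is_MOPS_for (K : {poly R} -> R) := is_MOPS (fun p q => K (p * q)).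

Variable K : {poly R} -> R.
Hypothesis KD : forall p q, K (p + q) = K p + K q.
Hypothesis KZ : forall k p, K (k *: p) = k * K p.

Lemma functional0 : K 0 = 0.
Proof. by have := KZ 0 0; rewrite scale0r mul0r. Qed.

Lemma functionalB p q : K (p - q) = K p - K q.
Proof. by rewrite KD -scaleN1r KZ mulN1r. Qed.

Variable Q : nat -> {poly R}.
Hypothesis hQ : is_MOPS_for K Q.

Lemma mops_size n : size (Q n) = n.+1.
Proof. by have [] := hQ n. Qed.

Lemma mops_lead n : (Q n)`_n = 1.
Proof. by have [/monicP + hs _ _] := hQ n; rewrite lead_coefE hs. Qed.

Lemma mops0 : Q 0 = 1.
Proof. by rewrite (size1_polyC (eq_leq (mops_size 0))) mops_lead. Qed.

Lemma mops_norm_neq0 n : K (Q n * Q n) != 0.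
Proof. by have [] := hQ n. Qed.

Lemma mops_orth_lt n m : (m < n)%N -> K (Q n * Q m) = 0.
Proof. by have [_ _ _] := hQ n; apply. Qed.

Lemma size_sub_mops q k :
  (size q <= k.+1)%N -> (size (q - q`_k *: Q k)%R <= k)%N.
Proof.
move=> sq; apply: size_sub_top_eq => //.
  by rewrite (leq_trans (size_scale_leq _ _)) ?mops_size.
by rewrite coefZ mops_lead mulr1.
Qed.

Lemma mops_orth n q : (size q <= n)%N -> K (Q n * q) = 0.
Proof.
suff orth_le k : (k <= n)%N -> forall q, (size q <= k)%N -> K (Q n * q) = 0.
  exact: orth_le.
elim: k => [_|k IH lt_kn] {}q sq.
  by move: sq; rewrite leqn0 size_poly_eq0 => /eqP ->; rewrite mulr0 functional0.
rewrite -(subrK (q`_k *: Q k) q) mulrDr KD -scalerAr KZ mops_orth_lt // mulr0.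
by rewrite addr0 (IH (ltnW lt_kn)) // size_sub_mops.
Qed.

Lemma mops_orth_eq0 m r :
  (size r <= m)%N -> (forall k, (k < m)%N -> K (r * Q k) = 0) -> r = 0.
Proof.
elim: m r => [|m IH] r sr orth_r.
  by apply/eqP; rewrite -size_poly_eq0 -leqn0.
have r_lead : r = r`_m *: Q m.
  apply/eqP; rewrite -subr_eq0; apply/eqP/IH; first exact: size_sub_mops.
  move=> k lt_km; rewrite mulrBl functionalB -scalerAl KZ mops_orth_lt //.
  by rewrite mulr0 subr0 orth_r // ltnW.
have := orth_r m (ltnSn m); rewrite {1}r_lead -scalerAl KZ => /eqP.
rewrite mulf_eq0 (negbTE (mops_norm_neq0 m)) orbF => /eqP rm0.
by rewrite r_lead rm0 scale0r.
Qed.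

Lemma mops_two_term n T :
  (size T <= n.+2)%N -> T`_n.+1 = 1 ->
  (forall q, (size q <= n)%N -> K (T * q) = 0) ->
  T = Q n.+1 + (T - Q n.+1)`_n *: Q n.
Proof.
move=> sT lead_T orth_T; set D := T - Q n.+1.
have sD : (size D <= n.+1)%N.
  by apply: size_sub_top_eq; rewrite ?mops_size ?mops_lead.
apply/eqP; rewrite -subr_eq0 opprD addrA -/D; apply/eqP.
apply: (mops_orth_eq0 (size_sub_mops sD)) => k lt_kn.
rewrite mulrBl functionalB -scalerAl KZ mops_orth_lt // mulr0.
by rewrite subr0 mulrBl functionalB orth_T ?mops_size // mops_orth_lt 1?ltnW ?subrr.
Qed.

Lemma mops_norm n U : (size (U - Q n)%R <= n)%N -> K (Q n * U) = K (Q n * Q n).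
Proof. by move=> sU; rewrite -(subrK (Q n) U) mulrDr KD mops_orth // add0r. Qed.

Lemma mops_rec_neq0 m b g :
  'X * Q m.+1 = Q m.+2 + b *: Q m.+1 + g *: Q m -> g != 0.
Proof.
move=> rec; apply: contraTneq (mops_norm_neq0 m.+1); rewrite negbK => g0.
have <- : K (Q m.+1 * ('X * Q m)) = K (Q m.+1 * Q m.+1).
  apply: mops_norm; apply: size_sub_top_eq; rewrite ?mops_size //=.
    by rewrite mulrC size_mulX -?size_poly_eq0 mops_size ?addn1.
  by rewrite coefXM /= !mops_lead.
have -> : Q m.+1 * ('X * Q m) = ('X * Q m.+1) * Q m.
  by rewrite mulrA (mulrC (Q m.+1)).
rewrite rec g0 scale0r addr0 mulrDl KD -scalerAl KZ !mops_orth_lt //.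
by rewrite mulr0 addr0.
Qed.

End OrthogonalFunctional.

(* In the use below p0, p1 are P_(m+1)(c), P_m(c); f0, f1 the corresponding
   M-moments; h = ||P_m||^2; and k, l the second coefficients of Q^c_(m+1)
   and Q^(c,N)_(m+1) in the basis P. *)
Lemma solve_mass_coef (R : fieldType) (p0 p1 f0 f1 h k l N : R) :
  p1 != 0 -> f1 != 0 -> h != 0 -> h = p1 * f0 - p0 * f1 ->
  f0 + k * f1 = 0 -> (f0 + N * p0) + l * (f1 + N * p1) = 0 ->
  1 + N * (- (p0 + k * p1) * p1 / h) != 0 ->
  l = (p0 / p1 - f0 / f1) / (1 + N * (- (p0 + k * p1) * p1 / h)) - p0 / p1.
Proof.
move=> p1_neq0 f1_neq0 h_neq0 eh ek el.
have -> : k = - f0 / f1.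
  apply: (mulIf f1_neq0); rewrite divfK //.
  by apply/eqP; rewrite -addr_eq0 addrC ek.
have -> : - (p0 + - f0 / f1 * p1) * p1 / h = p1 / f1.
  by apply: (mulIf h_neq0); rewrite divfK // eh; field.
have -> : 1 + N * (p1 / f1) = (f1 + N * p1) / f1 by field.
rewrite mulf_eq0 invr_eq0 (negbTE f1_neq0) orbF => den_neq0.
have -> : l = - (f0 + N * p0) / (f1 + N * p1).
  apply: (mulIf den_neq0); rewrite divfK //.
  by apply/eqP; rewrite -addr_eq0 addrC el.
by field; rewrite den_neq0 p1_neq0 f1_neq0.
Qed.

Section GeronimusTransform.
Variable R : realType.
Implicit Types (p q : {poly R}).
Variables (L K : {poly R} -> R) (c : R).
Hypotheses (LD : forall p q, L (p + q) = L p + L q)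
  (LZ : forall k p, L (k *: p) = k * L p).
Hypotheses (KD : forall p q, K (p + q) = K p + K q)
  (KZ : forall k p, K (k *: p) = k * K p).
Hypothesis KX : forall q, K (('X - c%:P) * q) = L q.

Lemma functional_divp_XsubC p q :
  K (p * q) = L (p * (q %/ ('X - c%:P))) + q.[c] * K p.
Proof.
rewrite {1}(divp_eq q ('X - c%:P)) modp_XsubC mulrDr KD mulrA mulrC KX.
by rewrite [p * _%:P]mulrC mul_polyC KZ.
Qed.

Variable P : nat -> {poly R}.
Hypothesis hP : is_MOPS_for L P.

Lemma size_divp_XsubC_mops m : size (P m %/ ('X - c%:P)) = m.
Proof. by rewrite size_divp ?polyXsubC_eq0 // size_XsubC (mops_size hP) subn1. Qed.

(* Compute K (P_(m+1) P_m) twice, dividing either factor by X - c. *)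
Lemma norm_wronskian m :
  L (P m * P m) = (P m).[c] * K (P m.+1) - (P m.+1).[c] * K (P m).
Proof.
set T := P m.+1 %/ ('X - c%:P).
have lead_T : T`_m = 1.
  have := mops_lead hP m.+1.
  rewrite {1}(divp_eq (P m.+1) ('X - c%:P)) modp_XsubC -/T mulrBr.
  rewrite coefD coefB coefMX coefMC coefC /= [T`_m.+1]nth_default.
    by rewrite mul0r subr0 addr0.
  by rewrite size_divp_XsubC_mops.
have e1 : K (P m.+1 * P m) = (P m).[c] * K (P m.+1).
  rewrite functional_divp_XsubC (mops_orth LD LZ hP) ?add0r //.
  by rewrite size_divp_XsubC_mops.
have e2 : K (P m * P m.+1) = L (P m * P m) + (P m.+1).[c] * K (P m).
  rewrite functional_divp_XsubC -/T (mops_norm LD LZ hP) //.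
  apply: size_sub_top_eq; rewrite ?size_divp_XsubC_mops ?(mops_size hP) //.
  by rewrite lead_T (mops_lead hP).
by rewrite -[LHS](addrK ((P m.+1).[c] * K (P m))) -e2 mulrC e1.
Qed.

Variable Q : nat -> {poly R}.
Hypothesis hQ : is_MOPS_for K Q.

Lemma geronimus_two_term m : Q m.+1 = P m.+1 + (Q m.+1 - P m.+1)`_m *: P m.
Proof.
apply: (mops_two_term LD LZ hP); rewrite ?(mops_size hQ) ?(mops_lead hQ) //.
move=> q sq; rewrite -KX mulrCA (mops_orth KD KZ hQ) //.
by apply: leq_trans (size_polyMleq _ _) _; rewrite size_XsubC add2n /= ltnS.
Qed.

Lemma geronimus_moment m : K (P m.+1) + (Q m.+1 - P m.+1)`_m * K (P m) = 0.
Proof.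
have := mops_orth_lt hQ (ltn0Sn m).
by rewrite (mops0 hQ) mulr1 {1}geronimus_two_term KD KZ.
Qed.

End GeronimusTransform.

Section MassPoint.
Variable R : realType.
Implicit Types (p q : {poly R}).
Variables (L M : {poly R} -> R) (c N : R).
Hypotheses (LD : forall p q, L (p + q) = L p + L q)
  (LZ : forall k p, L (k *: p) = k * L p).
Hypotheses (MD : forall p q, M (p + q) = M p + M q)
  (MZ : forall k p, M (k *: p) = k * M p).
Hypothesis MX : forall q, M (('X - c%:P) * q) = L q.

Definition MN p := M p + N * p.[c].

Lemma MND p q : MN (p + q) = MN p + MN q.
Proof. by rewrite /MN MD hornerD; ring. Qed.

Lemma MNZ k p : MN (k *: p) = k * MN p.
Proof. by rewrite /MN MZ hornerZ; ring. Qed.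

Lemma MNX q : MN (('X - c%:P) * q) = L q.
Proof. by rewrite /MN MX hornerM hornerXsubC subrr mul0r mulr0 addr0. Qed.

Variables P Qc QN : nat -> {poly R}.
Hypotheses (hP : is_MOPS_for L P) (hQc : is_MOPS_for M Qc)
  (hQN : is_MOPS_for MN QN).

Lemma QN_coefE m : (P m).[c] != 0 -> M (P m) != 0 ->
  let B := - (Qc m.+1).[c] * (P m).[c] / L (P m * P m) in
  1 + N * B != 0 ->
  (QN m.+1 - P m.+1)`_m =
    ((P m.+1).[c] / (P m).[c] - M (P m.+1) / M (P m)) / (1 + N * B)
    - (P m.+1).[c] / (P m).[c].
Proof.
move=> Pc_neq0 MP_neq0 B.
rewrite /B (geronimus_two_term LD LZ MD MZ MX hP hQc m) hornerD hornerZ.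
apply: solve_mass_coef => //.
- exact: (mops_norm_neq0 hP).
- exact: (norm_wronskian LD LZ MD MZ MX hP).
- exact: (geronimus_moment LD LZ MD MZ MX hP hQc).
- exact: (geronimus_moment LD LZ MND MNZ MNX hP hQN).
Qed.

End MassPoint.

Lemma size_DeltaP (R : realType) (Ln Lm bt gm : R) :
  Lm != 0 -> gm != 0 -> size (DeltaP Ln Lm bt gm) = 2.
Proof.
move=> Lm_neq0 gm_neq0.
have slope_neq0 : Lm / gm != 0 by rewrite mulf_neq0 ?invr_eq0.
have -> : DeltaP Ln Lm bt gm =
    (Lm / gm)%:P * 'X + (Lm * (1 / Lm) - Lm / gm * bt + Ln * Lm / gm)%:P.
  by rewrite /DeltaP !(polyCD, polyCN, polyCM, polyC1); ring.
by rewrite size_MXaddC polyC_eq0 (negbTE slope_neq0) /= size_polyC slope_neq0.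
Qed.

(* Pn, u, v stand for P_n(x), P_(n-1)(x), P_(n-2)(x), and dPn, du, dv for the
   values of their derivatives. *)
Lemma ladder_identity (R : realType)
    (Ln Lm bt gm sg an am bn bm x u v Pn dPn du dv : R) :
  sg != 0 -> bm != 0 -> Lm != 0 -> gm != 0 -> Deltaf Ln Lm bt gm x != 0 ->
  Pn = (x - bt) * u - gm * v ->
  dPn = (an * Pn + bn * u) / sg ->
  du = (am * u + bm * v) / sg ->
  dv = (u + (x - bt) * du - dPn) / gm ->
  let C1 := C1f Ln gm sg an bm in
  let D1 := D1f Ln bt gm sg bn am bm x in
  let C2 := C2f Lm bt gm sg an bm x in
  let D2 := D2f Lm bt gm sg bn am bm x in
  - xif C1 D1 Ln Lm bt gm x * (Pn + Ln * u) + (dPn + Ln * du)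
      = etaf C1 D1 Ln Lm bt gm x * (u + Lm * v)
  /\ - etaf C2 D2 Ln Lm bt gm x * (u + Lm * v) + (du + Lm * dv)
      = xif C2 D2 Ln Lm bt gm x * (Pn + Ln * u).
Proof.
move=> sg_neq0 bm_neq0 Lm_neq0 gm_neq0 Delta_neq0 -> -> -> -> /=.
have DeltaE : Deltaf Ln Lm bt gm x = (gm + Lm * (x - bt) + Ln * Lm) / gm.
  by rewrite /Deltaf /B2f; field; rewrite gm_neq0 Lm_neq0.
have num_neq0 : gm + Lm * (x - bt) + Ln * Lm != 0.
  by apply: contraNneq Delta_neq0; rewrite DeltaE => ->; rewrite mul0r.
rewrite /xif /etaf DeltaE /C1f /D1f /C2f /D2f /B2f.
by split; field; rewrite ?sg_neq0 ?bm_neq0 ?Lm_neq0 ?gm_neq0 ?num_neq0.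
Qed.

Section Ladder.
Variable R : realType.
Variables (P : nat -> {poly R}) (beta gamma : nat -> R).
Variables (sigma : {poly R}) (a b : nat -> {poly R}).
Hypothesis rec : forall m,
  'X * P m.+1 = P m.+2 + beta m.+1 *: P m.+1 + gamma m.+1 *: P m.
Hypothesis struct : forall m, (0 < m)%N ->
  sigma * (P m)^`() = a m * P m + b m * P m.-1.

Lemma horner_rec m x :
  (P m.+2).[x] = (x - beta m.+1) * (P m.+1).[x] - gamma m.+1 * (P m).[x].
Proof.
have := congr1 (horner^~ x) (rec m).
rewrite /= !(hornerM, hornerD, hornerZ, hornerX) => e.
by rewrite mulrBl e; ring.
Qed.

Lemma horner_struct m x : sigma.[x] != 0 ->
  (P m.+1)^`().[x] =
    ((a m.+1).[x] * (P m.+1).[x] + (b m.+1).[x] * (P m).[x]) / sigma.[x].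
Proof.
move=> sx; have := congr1 (horner^~ x) (struct (ltn0Sn m)).
by rewrite /= !(hornerM, hornerD) => <-; field.
Qed.

Lemma horner_deriv_rec m x : gamma m.+1 != 0 ->
  (P m)^`().[x] = ((P m.+1).[x] + (x - beta m.+1) * (P m.+1)^`().[x]
                    - (P m.+2)^`().[x]) / gamma m.+1.
Proof.
move=> g_neq0; have := congr1 (fun p => p^`().[x]) (rec m).
rewrite /= derivM derivX !derivD !derivZ.
rewrite !(hornerM, hornerD, hornerZ, hornerX, hornerC, mul1r) => e.
by apply: (mulIf g_neq0); rewrite divfK // mulrBl addrA e; ring.
Qed.

Lemma ladder_two_term m (Ln Lm x : R) :
  gamma m.+1 != 0 -> Lm != 0 ->
  sigma.[x] != 0 -> (b m.+1).[x] != 0 ->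
  Deltaf Ln Lm (beta m.+1) (gamma m.+1) x != 0 ->
  let U := P m.+2 + Ln *: P m.+1 in
  let V := P m.+1 + Lm *: P m in
  let bt := beta m.+1 in let gm := gamma m.+1 in
  let sg := sigma.[x] in
  let an := (a m.+2).[x] in let am := (a m.+1).[x] in
  let bn := (b m.+2).[x] in let bm := (b m.+1).[x] in
  let C1 := C1f Ln gm sg an bm in
  let D1 := D1f Ln bt gm sg bn am bm x in
  let C2 := C2f Lm bt gm sg an bm x in
  let D2 := D2f Lm bt gm sg bn am bm x in
  - xif C1 D1 Ln Lm bt gm x * U.[x] + U^`().[x]
      = etaf C1 D1 Ln Lm bt gm x * V.[x]
  /\ - etaf C2 D2 Ln Lm bt gm x * V.[x] + V^`().[x]
      = xif C2 D2 Ln Lm bt gm x * U.[x].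
Proof.
move=> g_neq0 Lm_neq0 sx bx Delta_neq0 U V; rewrite /U /V.
rewrite !derivD !derivZ !hornerD !hornerZ.
exact: (ladder_identity sx bx Lm_neq0 g_neq0 Delta_neq0 (horner_rec m x)
  (horner_struct m.+1 sx) (horner_struct m sx) (horner_deriv_rec x g_neq0)).
Qed.

End Ladder.

Lemma not_msupp_null_ball (R : realType) (mu : {measure set R -> \bar R}) c :
  ~ msupp mu c -> exists2 e : R, 0 < e & mu (ball c e) = 0%E.
Proof.
move=> c_notin; apply: contrapT => no_null; apply: c_notin => e e_gt0.
rewrite lt_neqAle measure_ge0 andbT eq_sym; apply/eqP => mu0.
by apply: no_null; exists e.
Qed.

Lemma measurable_inv (R : realType) : measurable_fun setT (@GRing.inv R).
Proof.
have -> : [set: R] = [set x | x != 0] `|` [set 0].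
  by apply/seteqP; split => x //= _; case: (eqVneq x 0) => [->|]; [right | left].
apply/measurable_funU.
- by apply: open_measurable; exact: open_neq.
- exact: measurable_set1.
split; last exact: measurable_fun_set1.
apply: open_continuous_measurable_fun; first exact: open_neq.
by move=> x; rewrite inE => x_neq0; exact: inv_continuous.
Qed.

Section MomentFunctionals.
Variables (R : realType) (mu : {measure set R -> \bar R}) (c e : R).
Hypotheses (e_gt0 : 0 < e) (mu_ball0 : mu (ball c e) = 0%E).
Hypothesis moments :
  forall k : nat, mu.-integrable setT (fun x : R => (x ^+ k)%:E).
Implicit Types (p q : {poly R}).

Definition off_ball := ~` ball c e.

Lemma measurable_off_ball : measurable off_ball.
Proof. by apply: measurableC; exact: measurable_ball. Qed.

Lemma off_ball_subr_neq0 x : off_ball x -> x - c != 0.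
Proof.
move=> x_off; rewrite subr_eq0; apply/eqP => xc.
by apply: x_off; rewrite xc; exact: ballxx.
Qed.

Lemma measurable_horner_div p : measurable_fun setT (fun x => p.[x] / (x - c)).
Proof.
apply: measurable_funM; first exact: measurable_poly.
have -> : (fun x : R => (x - c)^-1) = GRing.inv \o horner ('X - c%:P).
  by apply: funext => x /=; rewrite hornerXsubC.
by apply: measurableT_comp; [exact: measurable_inv | exact: measurable_poly].
Qed.

Lemma Rintegral_off_ball f :
  measurable_fun setT f -> Rintegral mu setT f = Rintegral mu off_ball f.
Proof.
move=> mf; rewrite [RHS]Rintegral_mkcond /Rintegral; congr fine.
apply: ae_eq_integral => //.
- exact/measurable_EFinP.
- apply/measurable_EFinP/(measurable_restrictT f measurable_off_ball).
  exact: measurable_funS mf.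
exists (ball c e); split => //; first exact: measurable_ball.
move=> x /= neq; apply: contrapT => x_off; apply: neq => _.
by rewrite patchE mem_set.
Qed.

Lemma integrable_horner p : mu.-integrable setT (fun x => p.[x]%:E).
Proof.
apply: (@eq_integrable _ _ _ mu setT measurableT
  (fun x => \sum_(i < size p) (p`_i * x ^+ i)%:E)%E).
  by move=> x _; rewrite sumEFin horner_coef.
apply: (integrable_sum measurableT) => i _.
apply: (@eq_integrable _ _ _ mu setT measurableT
  (fun x => (p`_i)%:E * (x ^+ i)%:E)%E) => //.
exact: (integrableZl measurableT).
Qed.

Lemma integrable_horner_off_ball p :
  mu.-integrable off_ball (fun x => p.[x]%:E).
Proof.
apply: integrableS measurableT measurable_off_ball (@subsetT _ _) _.
exact: integrable_horner.
Qed.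

Lemma integrable_horner_div_off_ball p :
  mu.-integrable off_ball (fun x => (p.[x] / (x - c))%:E).
Proof.
apply: (le_integrable measurable_off_ball _ _
  (integrableZl measurable_off_ball e^-1 (integrable_horner_off_ball p))).
  apply/measurable_EFinP; exact: measurable_funS (measurable_horner_div p).
move=> x x_off; rewrite -EFinM !abse_EFin lee_fin !normrM mulrC ler_wpM2r //.
rewrite normfV ger0_norm ?invr_ge0 ?(ltW e_gt0) //.
rewrite lef_pV2 ?posrE ?normr_gt0 ?off_ball_subr_neq0 //.
by rewrite leNgt; apply/negP => lt; apply: x_off; rewrite /ball /= distrC.
Qed.

(* Off the null ball, 1 / (x - c) is bounded, so both functionals are finite. *)
Definition Lf p := Rintegral mu off_ball (fun x => p.[x]).
Definition Mf p := Rintegral mu off_ball (fun x => p.[x] / (x - c)).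

Lemma LfD p q : Lf (p + q) = Lf p + Lf q.
Proof.
rewrite /Lf -RintegralD;
  [|exact: measurable_off_ball|exact: integrable_horner_off_ball ..].
by apply: eq_Rintegral => x _; rewrite hornerD.
Qed.

Lemma LfZ k p : Lf (k *: p) = k * Lf p.
Proof.
rewrite /Lf -RintegralZl;
  [|exact: measurable_off_ball|exact: integrable_horner_off_ball].
by apply: eq_Rintegral => x _; rewrite hornerZ.
Qed.

Lemma MfD p q : Mf (p + q) = Mf p + Mf q.
Proof.
rewrite /Mf -RintegralD;
  [|exact: measurable_off_ball|exact: integrable_horner_div_off_ball ..].
by apply: eq_Rintegral => x _; rewrite hornerD mulrDl.
Qed.

Lemma MfZ k p : Mf (k *: p) = k * Mf p.
Proof.
rewrite /Mf -RintegralZl;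
  [|exact: measurable_off_ball|exact: integrable_horner_div_off_ball].
by apply: eq_Rintegral => x _; rewrite hornerZ mulrA.
Qed.

Lemma MfX q : Mf (('X - c%:P) * q) = Lf q.
Proof.
apply: eq_Rintegral => x /set_mem x_off.
by rewrite hornerM hornerXsubC mulrAC divff ?mul1r ?off_ball_subr_neq0.
Qed.

Lemma ip_muE : ip_mu mu = fun p q => Lf (p * q).
Proof.
apply/funext => p; apply/funext => q; rewrite /ip_mu /Lf.
have -> : (fun x => p.[x] * q.[x]) = (fun x => (p * q).[x]).
  by apply/funext => x; rewrite hornerM.
by apply: Rintegral_off_ball; exact: measurable_poly.
Qed.

Lemma ip_nuE : ip_nu mu c = fun p q => Mf (p * q).
Proof.
apply/funext => p; apply/funext => q; rewrite /ip_nu /Mf.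
have -> : (fun x => p.[x] * q.[x] / (x - c)) = (fun x => (p * q).[x] / (x - c)).
  by apply/funext => x; rewrite hornerM.
by apply: Rintegral_off_ball; exact: measurable_horner_div.
Qed.

Lemma FstE (P : nat -> {poly R}) k : Fst mu P k c = Mf (P k).
Proof. by apply: Rintegral_off_ball; exact: measurable_horner_div. Qed.

Variable N : R.

Lemma ip_nuNE : ip_nuN mu c N = fun p q => MN Mf c N (p * q).
Proof.
by apply/funext => p; apply/funext => q; rewrite /ip_nuN ip_nuE /MN hornerM mulrA.
Qed.

Variables P Qc QN : nat -> {poly R}.
Hypotheses (hP : is_MOPS (ip_mu mu) P) (hQc : is_MOPS (ip_nu mu c) Qc)
  (hQN : is_MOPS (ip_nuN mu c N) QN).

Lemma QN_Lambda m :
  (P m).[c] != 0 -> Fm1 mu P m.+1 c != 0 -> 1 + N * Bc mu P Qc c m.+1 != 0 ->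
  QN m.+1 = P m.+1 + Lambda mu P Qc c N m.+1 *: P m.
Proof.
have hPL : is_MOPS_for Lf P by rewrite /is_MOPS_for -ip_muE.
have hQcM : is_MOPS_for Mf Qc by rewrite /is_MOPS_for -ip_nuE.
have hQNM : is_MOPS_for (MN Mf c N) QN by rewrite /is_MOPS_for -ip_nuNE.
rewrite /= /Bc /= FstE ip_muE /= => Pc_neq0 MP_neq0 B_neq0.
rewrite {1}(geronimus_two_term LfD LfZ (MND c N MfD) (MNZ c N MfZ) (MNX N MfX)
  hPL hQNM m).
rewrite /Lambda /Bc /= !FstE ip_muE /=.
by rewrite (QN_coefE LfD LfZ MfD MfZ MfX hPL hQcM hQNM).
Qed.

End MomentFunctionals.

Theorem theorem4 (R : realType) (mu : {measure set R -> \bar R})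
  (mu_ac : mu `<< (@lebesgue_measure R))
  (mu_moments : forall k : nat, mu.-integrable setT (fun x : R => (x ^+ k)%:E))
  (mu_infinite : ~ finite_set (msupp mu))
  (c : R) (hc : ~ msupp mu c) (N : R) (hN : 0 < N)
  (P Qc QN : nat -> {poly R})
  (hP : is_MOPS (ip_mu mu) P)
  (hQc : is_MOPS (ip_nu mu c) Qc)
  (hQN : is_MOPS (ip_nuN mu c N) QN)
  (beta gamma : nat -> R)
  (rec0 : 'X * P 0%N = P 1%N + beta 0%N *: P 0%N)
  (rec : forall m : nat,
     'X * P m.+1 = P m.+2 + beta m.+1 *: P m.+1 + gamma m.+1 *: P m)
  (sigma : {poly R}) (a b : nat -> {poly R}) (sigma_nz : sigma != 0)
  (struct : forall m : nat, (0 < m)%N ->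
     sigma * (P m)^`() = a m * P m + b m * P m.-1)
  (deg_bounded : exists d : nat, forall m : nat,
     (size (a m) <= d)%N /\ (size (b m) <= d)%N)
  (n : nat) (hn : (2 <= n)%N)
  (* the displayed quantities are defined *)
  (def_P1 : (P n.-1).[c] != 0) (def_P2 : (P n.-2).[c] != 0)
  (def_F1 : Fm1 mu P n c != 0) (def_F2 : Fm1 mu P n.-1 c != 0)
  (def_B1 : 1 + N * Bc mu P Qc c n != 0)
  (def_B2 : 1 + N * Bc mu P Qc c n.-1 != 0)
  (def_L : Lambda mu P Qc c N n.-1 != 0)
  (def_b : b n.-1 != 0) :
  let Ln := Lambda mu P Qc c N n in
  let Lm := Lambda mu P Qc c N n.-1 in
  let bt := beta n.-1 in
  let gm := gamma n.-1 in
  size (DeltaP Ln Lm bt gm) = 2%N /\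
  forall x : R,
    sigma.[x] != 0 -> (b n.-1).[x] != 0 -> Deltaf Ln Lm bt gm x != 0 ->
    let sg := sigma.[x] in
    let an := (a n).[x] in let am := (a n.-1).[x] in
    let bn := (b n).[x] in let bm := (b n.-1).[x] in
    let C1 := C1f Ln gm sg an bm in
    let D1 := D1f Ln bt gm sg bn am bm x in
    let C2 := C2f Lm bt gm sg an bm x in
    let D2 := D2f Lm bt gm sg bn am bm x in
    (* a_n [Q_n^{c,N}] = eta_1 Q_{n-1}^{c,N} *)
    - xif C1 D1 Ln Lm bt gm x * (QN n).[x] + (QN n)^`().[x]
      = etaf C1 D1 Ln Lm bt gm x * (QN n.-1).[x]
    /\
    (* a_n^dagger [Q_{n-1}^{c,N}] = xi_2 Q_n^{c,N} *)
    - etaf C2 D2 Ln Lm bt gm x * (QN n.-1).[x] + (QN n.-1)^`().[x]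
      = xif C2 D2 Ln Lm bt gm x * (QN n).[x].
Proof.
have [e e_gt0 mu_ball0] := not_msupp_null_ball hc.
have hPL : is_MOPS_for (Lf mu c e) P by rewrite /is_MOPS_for -(ip_muE mu_ball0).
case: n hn def_P1 def_P2 def_F1 def_F2 def_B1 def_B2 def_L def_b => [|[|m]] // _ /=.
move=> P1c_neq0 P0c_neq0 F1_neq0 F0_neq0 B1_neq0 B0_neq0 Lm_neq0 _.
have gm_neq0 : gamma m.+1 != 0 :=
  mops_rec_neq0 (LfD c e mu_moments) (LfZ c e mu_moments) hPL (rec m).
split; first exact: size_DeltaP.
move=> x sx bx Delta_neq0.
rewrite (QN_Lambda e_gt0 mu_ball0 mu_moments hP hQc hQN P1c_neq0 F1_neq0 B1_neq0).
rewrite (QN_Lambda e_gt0 mu_ball0 mu_moments hP hQc hQN P0c_neq0 F0_neq0 B0_neq0).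
exact: (ladder_two_term rec struct gm_neq0 Lm_neq0 sx bx Delta_neq0).
Qed.
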